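(* Let $p$ be a propositional variable. The formula $\neg\neg\Box p\to\Box\neg\neg p$ is derivable in $\mathsf{CK}\oplus\mathsf{N}_\Diamond\oplus\mathsf{I}_{\Diamond\Box}$ but not in $\mathsf{CK}\oplus\mathsf{N}_{\Diamond\Box}\oplus\mathsf{C}_\Diamond\oplus\mathsf{I}_{\Diamond\Box}$ (and hence not in $\mathsf{CK}\oplus\mathsf{N}_{\Diamond\Box}\oplus\mathsf{I}_{\Diamond\Box}$).
   Context: Formulas: $\mathbf{L}$ is generated from a countably infinite set of propositional variables by $\varphi ::= p \mid \bot \mid \varphi\wedge\varphi \mid \varphi\vee\varphi \mid \varphi\to\varphi \mid \Box\varphi \mid \Diamond\varphi$; $\neg\varphi:=\varphi\to\bot$. Axioms: $\mathsf{K}_\Box$: $\Box(\varphi\to\psi)\to(\Box\varphi\to\Box\psi)$; $\mathsf{K}_\Diamond$: $\Box(\varphi\to\psi)\to(\Diamond\varphi\to\Diamond\psi)$; $\mathsf{N}_\Diamond$: $\Diamond\bot\to\bot$; $\mathsf{N}_{\Diamond\Box}$: $\Diamond\bot\to\Box\bot$; $\mathsf{C}_\Diamond$: $\Diamond(\varphi\vee\psi)\to\Diamond\varphi\vee\Diamond\psi$; $\mathsf{I}_{\Diamond\Box}$: $(\Diamond\varphi\to\Box\psi)\to\Box(\varphi\to\psi)$. For a set $\mathsf{Ax}$ of axioms, $\mathsf{CK}\oplus\mathsf{Ax}$ is the relation $\Gamma\vdash_{\mathsf{Ax}}\varphi$ inductively generated by: (Ax) $\Gamma\vdash\varphi$ whenever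 $\varphi$ is a substitution instance of an axiom of a standard Hilbert axiomatisation of intuitionistic propositional logic, of $\mathsf{K}_\Box$, of $\mathsf{K}_\Diamond$, or of an element of $\mathsf{Ax}$; (El) $\Gamma\vdash\varphi$ if $\varphi\in\Gamma$; (MP) from $\Gamma\vdash\varphi$ and $\Gamma\vdash\varphi\to\psi$ infer $\Gamma\vdash\psi$; (Nec) from $\emptyset\vdash\varphi$ infer $\Gamma\vdash\Box\varphi$. A formula is derivable in a logic if $\emptyset\vdash_{\mathsf{Ax}}\varphi$. *)

From Stdlib Require Import List.

Inductive form : Type :=
| Var : nat -> form
| Bot : form
| And : form -> form -> form
| Or : form -> form -> form
| Imp : form -> form -> form
| Box : form -> form
| Dia : form -> form.

Definition Neg (a : form) : form := Imp a Bot.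

(* Axiom schemas of a standard Hilbert axiomatisation of IPC.  Using schemas
   (all formulas a b c) is the same as taking all substitution instances. *)
Inductive IPC_ax : form -> Prop :=
| ipc_k  : forall a b, IPC_ax (Imp a (Imp b a))
| ipc_s  : forall a b c, IPC_ax (Imp (Imp a (Imp b c)) (Imp (Imp a b) (Imp a c)))
| ipc_and1 : forall a b, IPC_ax (Imp (And a b) a)
| ipc_and2 : forall a b, IPC_ax (Imp (And a b) b)
| ipc_andI : forall a b, IPC_ax (Imp a (Imp b (And a b)))
| ipc_or1 : forall a b, IPC_ax (Imp a (Or a b))
| ipc_or2 : forall a b, IPC_ax (Imp b (Or a b))
| ipc_orE : forall a b c, IPC_ax (Imp (Imp a c) (Imp (Imp b c) (Imp (Or a b) c)))
| ipc_efq : forall a, IPC_ax (Imp Bot a).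

Definition K_Box (f : form) : Prop :=
  exists a b, f = Imp (Box (Imp a b)) (Imp (Box a) (Box b)).
Definition K_Dia (f : form) : Prop :=
  exists a b, f = Imp (Box (Imp a b)) (Imp (Dia a) (Dia b)).
Definition N_Dia (f : form) : Prop := f = Imp (Dia Bot) Bot.
Definition N_DiaBox (f : form) : Prop := f = Imp (Dia Bot) (Box Bot).
Definition C_Dia (f : form) : Prop :=
  exists a b, f = Imp (Dia (Or a b)) (Or (Dia a) (Dia b)).
Definition I_DiaBox (f : form) : Prop :=
  exists a b, f = Imp (Imp (Dia a) (Box b)) (Box (Imp a b)).

Definition AxSet := form -> Prop.
Definition ax_union (A B : AxSet) : AxSet := fun f => A f \/ B f.

Inductive derives (Ax : AxSet) : (form -> Prop) -> form -> Prop :=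
| d_ipc : forall G f, IPC_ax f -> derives Ax G f
| d_kbox : forall G f, K_Box f -> derives Ax G f
| d_kdia : forall G f, K_Dia f -> derives Ax G f
| d_ax : forall G f, Ax f -> derives Ax G f
| d_el : forall (G : form -> Prop) f, G f -> derives Ax G f
| d_mp : forall G f g, derives Ax G f -> derives Ax G (Imp f g) -> derives Ax G g
| d_nec : forall G f, derives Ax (fun _ => False) f -> derives Ax G (Box f).

Definition derivable (Ax : AxSet) (f : form) : Prop :=
  derives Ax (fun _ => False) f.

Definition L_NDia_IDiaBox : AxSet := ax_union N_Dia I_DiaBox.
Definition L_NDiaBox_CDia_IDiaBox : AxSet :=
  ax_union N_DiaBox (ax_union C_Dia I_DiaBox).
Definition L_NDiaBox_IDiaBox : AxSet := ax_union N_DiaBox I_DiaBox.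

(* Derivability: with a := ¬p and b := ⊥, the axiom I_◇□ turns ◇¬p → □⊥ into
   □¬¬p.  Under ¬¬□p that premise holds, since ◇¬p and □p give ◇⊥ by K_◇,
   hence ⊥ by N_◇.
   Underivability: the three-element Heyting chain 0 < m < 1 with □x = 1 if
   x = 1 (else m) and ◇x = m if x = 0 (else 1) validates CK, N_◇□, C_◇ and
   I_◇□, but evaluates the formula to m when p = 0. *)

Definition extend (G : form -> Prop) (a : form) : form -> Prop :=
  fun x => x = a \/ G x.

Section Hilbert.
Variable Ax : AxSet.

Lemma derives_imp_refl G a : derives Ax G (Imp a a).
Proof.
  eapply d_mp; [apply d_ipc, (ipc_k a a) |].
  eapply d_mp; [apply d_ipc, (ipc_k a (Imp a a)) |].
  apply d_ipc, (ipc_s a (Imp a a) a).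
Qed.

Lemma derives_deduction G a f :
  derives Ax (extend G a) f -> derives Ax G (Imp a f).
Proof.
  remember (extend G a) as Ga eqn:HGa; intros D.
  induction D; subst G0;
    try (eapply d_mp; [| apply d_ipc, ipc_k]; now constructor).
  - destruct H as [-> | HG].
    + apply derives_imp_refl.
    + eapply d_mp; [apply d_el, HG | apply d_ipc, ipc_k].
  - eapply d_mp; [now apply IHD1 |].
    eapply d_mp; [now apply IHD2 | apply d_ipc, ipc_s].
Qed.

Lemma derives_extend_hyp G a : derives Ax (extend G a) a.
Proof. apply d_el; now left. Qed.

Lemma derives_imp_negneg G a : derives Ax G (Imp a (Neg (Neg a))).
Proof.
  do 2 apply derives_deduction.
  eapply d_mp; [| apply derives_extend_hyp].
  apply d_el; right; now left.
Qed.

Lemma derives_box_negneg G a : derives Ax G (Imp (Box a) (Box (Neg (Neg a)))).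
Proof.
  eapply d_mp; [apply d_nec, derives_imp_negneg |].
  apply d_kbox; now exists a, (Neg (Neg a)).
Qed.

Section NDia_IDiaBox.
Hypothesis N_Dia_in_Ax : forall f, N_Dia f -> Ax f.
Hypothesis I_DiaBox_in_Ax : forall f, I_DiaBox f -> Ax f.

Lemma derives_dia_neg_not_box G a : derives Ax G (Imp (Dia (Neg a)) (Neg (Box a))).
Proof.
  do 2 apply derives_deduction.
  set (G2 := extend (extend G (Dia (Neg a))) (Box a)).
  assert (Hdia_bot : derives Ax G2 (Dia Bot)).
  { eapply d_mp; [apply d_el; right; now left |].
    eapply d_mp; [eapply d_mp; [apply derives_extend_hyp | apply derives_box_negneg] |].
    apply d_kdia; now exists (Neg a), Bot. }
  eapply d_mp; [exact Hdia_bot | now apply d_ax, N_Dia_in_Ax].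
Qed.

Lemma derivable_negneg_box_box_negneg a :
  derivable Ax (Imp (Neg (Neg (Box a))) (Box (Neg (Neg a)))).
Proof.
  apply derives_deduction.
  set (G1 := extend (fun _ => False) (Neg (Neg (Box a)))).
  assert (Hdia_box_bot : derives Ax G1 (Imp (Dia (Neg a)) (Box Bot))).
  { apply derives_deduction.
    eapply d_mp; [| apply d_ipc, ipc_efq].
    eapply d_mp; [| apply d_el; right; now left].
    eapply d_mp; [apply derives_extend_hyp | apply derives_dia_neg_not_box]. }
  eapply d_mp; [exact Hdia_box_bot |].
  apply d_ax, I_DiaBox_in_Ax; now exists (Neg a), Bot.
Qed.

End NDia_IDiaBox.
End Hilbert.

Lemma derives_mono_ax (A B : AxSet) G f :
  (forall g, A g -> B g) -> derives A G f -> derives B G f.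
Proof.
  intros HAB D; induction D.
  - now apply d_ipc.
  - now apply d_kbox.
  - now apply d_kdia.
  - now apply d_ax, HAB.
  - now apply d_el.
  - now apply d_mp with f.
  - now apply d_nec.
Qed.

Inductive chain3 := Zero | Mid | One.

Definition meet3 (x y : chain3) : chain3 :=
  match x, y with
  | Zero, _ | _, Zero => Zero
  | Mid, _ | _, Mid => Mid
  | One, One => One
  end.

Definition join3 (x y : chain3) : chain3 :=
  match x, y with
  | One, _ | _, One => One
  | Mid, _ | _, Mid => Mid
  | Zero, Zero => Zero
  end.

Definition imp3 (x y : chain3) : chain3 :=
  match x, y with
  | Zero, _ | Mid, Mid | Mid, One | One, One => One
  | _, _ => y
  end.

Definition box3 (x : chain3) : chain3 := match x with One => One | _ => Mid end.
Definition dia3 (x : chain3) : chain3 := match x with Zero => Mid | _ => One end.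

Fixpoint eval3 (v : nat -> chain3) (f : form) : chain3 :=
  match f with
  | Var n => v n
  | Bot => Zero
  | And a b => meet3 (eval3 v a) (eval3 v b)
  | Or a b => join3 (eval3 v a) (eval3 v b)
  | Imp a b => imp3 (eval3 v a) (eval3 v b)
  | Box a => box3 (eval3 v a)
  | Dia a => dia3 (eval3 v a)
  end.

Definition valid3 (f : form) : Prop := forall v, eval3 v f = One.

Ltac chain3_table v :=
  simpl; repeat match goal with |- context [eval3 v ?a] => destruct (eval3 v a) end;
  reflexivity.

Lemma valid3_IPC_ax f : IPC_ax f -> valid3 f.
Proof. intros [] v; chain3_table v. Qed.

Lemma valid3_K_Box f : K_Box f -> valid3 f.
Proof. intros (a & b & ->) v; chain3_table v. Qed.

Lemma valid3_K_Dia f : K_Dia f -> valid3 f.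
Proof. intros (a & b & ->) v; chain3_table v. Qed.

Lemma valid3_N_DiaBox f : N_DiaBox f -> valid3 f.
Proof. intros -> v; reflexivity. Qed.

Lemma valid3_C_Dia f : C_Dia f -> valid3 f.
Proof. intros (a & b & ->) v; chain3_table v. Qed.

Lemma valid3_I_DiaBox f : I_DiaBox f -> valid3 f.
Proof. intros (a & b & ->) v; chain3_table v. Qed.

Lemma valid3_mp f g : valid3 f -> valid3 (Imp f g) -> valid3 g.
Proof.
  intros Hf Hfg v; specialize (Hfg v); simpl in Hfg; rewrite (Hf v) in Hfg.
  now destruct (eval3 v g).
Qed.

Lemma derives_valid3 (Ax : AxSet) G f :
  (forall g, Ax g -> valid3 g) -> (forall g, G g -> valid3 g) ->
  derives Ax G f -> valid3 f.
Proof.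
  intros HAx HG D; revert HG; induction D; intros HG.
  - now apply valid3_IPC_ax.
  - now apply valid3_K_Box.
  - now apply valid3_K_Dia.
  - now apply HAx.
  - now apply HG.
  - apply valid3_mp with f; auto.
  - intros v; simpl; rewrite IHD; [reflexivity | tauto].
Qed.

Lemma derivable_valid3 (Ax : AxSet) f :
  (forall g, Ax g -> valid3 g) -> derivable Ax f -> valid3 f.
Proof. intros HAx; apply derives_valid3; tauto. Qed.

Lemma valid3_L_NDiaBox_CDia_IDiaBox f : L_NDiaBox_CDia_IDiaBox f -> valid3 f.
Proof.
  intros [H | [H | H]];
    [apply valid3_N_DiaBox | apply valid3_C_Dia | apply valid3_I_DiaBox]; exact H.
Qed.

Lemma L_NDiaBox_IDiaBox_sub f : L_NDiaBox_IDiaBox f -> L_NDiaBox_CDia_IDiaBox f.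
Proof. intros [H | H]; [left | right; right]; exact H. Qed.

Theorem mainTheorem16 : forall p : nat,
  let phi := Imp (Neg (Neg (Box (Var p)))) (Box (Neg (Neg (Var p)))) in
  derivable L_NDia_IDiaBox phi /\
  ~ derivable L_NDiaBox_CDia_IDiaBox phi /\
  ~ derivable L_NDiaBox_IDiaBox phi.
Proof.
  intros p phi.
  assert (Hnot : ~ derivable L_NDiaBox_CDia_IDiaBox phi).
  { intros H.
    pose proof (derivable_valid3 _ _ valid3_L_NDiaBox_CDia_IDiaBox H (fun _ => Zero)).
    discriminate. }
  split; [| split; [exact Hnot |]].
  - apply derivable_negneg_box_box_negneg; intros f Hf; [left | right]; exact Hf.
  - intros H; apply Hnot, (derives_mono_ax _ _ _ _ L_NDiaBox_IDiaBox_sub H).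
Qed.
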